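(* For every $d\ge1$ and all sufficiently small $\epsilon>0$, the following holds. For any learning-to-rent algorithm there exists a family of $1$-Lipschitz joint distributions of $(x,y)$ with $x\in[0,1]^d$, $y\in(0,\infty)$, such that if the algorithm uses at most $1/\epsilon^{d/4}$ samples then its expected competitive ratio (over a uniformly random member of the family and the samples) exceeds $(1+\epsilon)$ times the optimum, where for each member of the family the optimal threshold function achieves expected competitive ratio $1$. In particular, $(1+\epsilon)$-accuracy requires $1/\epsilon^{\Omega(d)}$ samples.
   Context: Ski-rental setting: buying costs $1$, renting costs $1$ per unit time, season length $y>0$; a threshold $\theta\ge0$ means rent until time $\theta$ then buy, with competitive ratio $g(\theta,y)=\frac{1+\theta}{\min\{1,y\}}$ if $y\ge\theta$ and $\frac{y}{\min\{1,y\}}$ otherwise. In the learning-to-rent problem the algorithm receives i.i.d. samples of $(x,y)$ from an unknown joint distribution $\mathbb{K}$ and outputs a threshold function $\theta_A(x)$; its expected competitive ratio is $\mathbb{E}_{(x,y)\sim\mathbb{K}}[g(\theta_A(x),y)]$, and it is $(1+\epsilon)$-accurate if this is at most $(1+\epsilon)\inf_{\theta(\cdot)}\mathbb{E}_{(x,y)\sim\mathbb{K}}[g(\theta(x),y)]$. Earth mover distance between distributions on $\mathbb{R}$: $\mathrm{EMD}(\mathbb{X},\mathbb{Y})=\min\mathbb{E}_{(u,v)\sim\mathbb{J}}|u-v|$ over couplings $\mathbb{J}$ of $\mathbb{X},\mathbb{Y}$. A joint distribution of $(x,y)$ is $L$-Lipschitz if for all $x_1,x_2$ (in the support of $x$)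 the conditional distributions $y\mid x_1$ and $y\mid x_2$ have EMD at most $L\|x_1-x_2\|_2$. *)

From HB Require Import structures.
From mathcomp Require Import all_boot all_order all_algebra.
From mathcomp Require Import reals exp.
Set Implicit Arguments. Unset Strict Implicit. Unset Printing Implicit Defensive.
Import Order.TTheory GRing.Theory Num.Theory.
Local Open Scope ring_scope.

Section LearningToRent.
Variables (R : realType) (d : nat).

Definition feat := 'rV[R]_d.

Definition dist2 (x1 x2 : feat) : R :=
  Num.sqrt (\sum_(i < d) (x1 ord0 i - x2 ord0 i) ^+ 2).

(* competitive ratio of threshold theta on season length y *)
Definition g (theta y : R) : R :=
  if theta <= y then (1 + theta) / Num.min 1 y else y / Num.min 1 y.

(* A finitely supported probability distribution on T, given as a list of
   weighted atoms (weight, point). *)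
Definition is_dist (T : eqType) (s : seq (R * T)) : Prop :=
  (forall p, p \in s -> 0 <= p.1)%R /\ \sum_(p <- s) p.1 = 1.
Arguments is_dist : clear implicits.

Definition expect (T : Type) (s : seq (R * T)) (f : T -> R) : R :=
  \sum_(p <- s) p.1 * f p.2.

Definition mass (T : eqType) (s : seq (R * T)) (t : T) : R :=
  \sum_(p <- s | p.2 == t) p.1.

Definition joint := seq (R * (feat * R)).

Definition is_joint (K : joint) : Prop :=
  is_dist (feat * R)%type K /\
  (forall p, p \in K -> (forall i, 0 <= p.2.1 ord0 i <= 1) /\ 0 < p.2.2).

Definition xmass (K : joint) (x : feat) : R := \sum_(p <- K | p.2.1 == x) p.1.
Definition in_xsupp (K : joint) (x : feat) : Prop := 0 < xmass K x.

Definition cond (K : joint) (x : feat) : seq (R * R) :=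
  [seq (p.1 / xmass K x, p.2.2) | p <- K & p.2.1 == x].

Definition coupling (J : seq (R * (R * R))) (a b : seq (R * R)) : Prop :=
  is_dist (R * R)%type J /\
  (forall u, mass [seq (p.1, p.2.1) | p <- J] u = mass a u) /\
  (forall v, mass [seq (p.1, p.2.2) | p <- J] v = mass b v).

(* EMD(a,b) <= c  (the minimum over couplings is attained, so this is
   "some coupling has cost <= c") *)
Definition emd_le (a b : seq (R * R)) (c : R) : Prop :=
  exists J, coupling J a b /\ expect J (fun uv => `|uv.1 - uv.2|) <= c.

Definition lipschitz (L : R) (K : joint) : Prop :=
  forall x1 x2, in_xsupp K x1 -> in_xsupp K x2 ->
    emd_le (cond K x1) (cond K x2) (L * dist2 x1 x2).

Definition ecr (K : joint) (theta : feat -> R) : R :=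
  expect K (fun xy => g (theta xy.1) xy.2).

Definition threshold_fun (theta : feat -> R) : Prop := forall x, 0 <= theta x.

Definition opt_is (K : joint) (c : R) : Prop :=
  (exists theta, threshold_fun theta /\ ecr K theta = c) /\
  (forall theta, threshold_fun theta -> c <= ecr K theta).

Fixpoint Esamp (K : joint) (n : nat) (F : seq (feat * R) -> R) : R :=
  match n with
  | 0 => F [::]
  | n'.+1 => \sum_(p <- K) p.1 * Esamp K n' (fun s => F (p.2 :: s))
  end.

Definition algorithm := seq (feat * R) -> feat -> R.
Definition valid_alg (A : algorithm) : Prop := forall s, threshold_fun (A s).

Definition avg_ecr (A : algorithm) (F : seq joint) (n : nat) : R :=
  (size F)%:R^-1 * \sum_(K <- F) Esamp K n (fun S => ecr K (A S)).

End LearningToRent.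

From HB Require Import structures.
From mathcomp Require Import all_boot all_order all_algebra.
From mathcomp Require Import reals exp.
From mathcomp Require Import ring lra zify.
Import Order.TTheory GRing.Theory Num.Theory.
Local Open Scope ring_scope.

(** Split [0,1]^d into the k^d points of the grid of mesh 1/k and let
    gap := 1/(2k).  For every labelling s of the grid by bits, the
    distribution K_s is uniform on the grid, with deterministic season
    length 1 + gap on points labelled true and 1 - gap on the others.  Since
    distinct grid points are at distance >= 1/k = 2 gap, each K_s is
    1-Lipschitz, and the threshold "buy at once on 1 + gap, never buy on
    1 - gap" has ratio exactly 1.  A point that does not occur in the samples
    is invisible to the algorithm, so flipping its label does not change the
    threshold used there; as g(th, 1 + gap) + g(th, 1 - gap) >= 2 + gap for
    every th, such a point costs gap/2 on average over s.  With at most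
    k^d/2 samples at least half of the points are unseen, so the average
    ratio is at least 1 + gap/4.  Taking k of order 1/eps makes this exceed
    1 + eps while k^d/2 still exceeds eps^(-d/4). *)

Lemma g_ge1 (R : realType) (th y : R) : 0 <= th -> 0 < y -> 1 <= g th y.
Proof.
move=> th_ge0 y_gt0; rewrite /g.
have m_gt0 : 0 < Num.min 1 y by rewrite lt_min ltr01 y_gt0.
have m_le1 : Num.min 1 y <= 1 by rewrite ge_min lexx.
have m_ley : Num.min 1 y <= y by rewrite ge_min lexx orbT.
by case: ifP => _; rewrite ler_pdivlMr // mul1r; lra.
Qed.

Lemma g_addpm_ge (R : realType) {th e : R} : 0 <= th -> 0 < e -> e <= 1/2 ->
  2 + e <= g th (1 + e) + g th (1 - e).
Proof.
move=> th_ge0 e_gt0 e_le; rewrite /g.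
rewrite (@min_l _ _ 1 (1 + e)); last lra.
rewrite (@min_r _ _ 1 (1 - e)); last lra.
rewrite divr1.
have le_gt0 : 0 < 1 - e by lra.
case: (lerP th (1 - e)) => th_le.
  rewrite ifT; last lra.
  suff : 1 + e <= (1 + th) / (1 - e) by lra.
  by rewrite ler_pdivlMr //; nra.
rewrite divff; last lra.
by case: ifP; lra.
Qed.

Lemma emd_le_dirac (R : realType) (y1 y2 c : R) : `|y1 - y2| <= c ->
  emd_le [:: (1, y1)] [:: (1, y2)] c.
Proof.
move=> le_c; exists [:: (1, (y1, y2))]; split; last first.
  by rewrite /expect big_seq1 /= mul1r.
split; last by [].
split; last by rewrite big_seq1.
by move=> p; rewrite inE => /eqP ->.
Qed.

Lemma card_predC_seq_ge (T : finType) (l : seq T) :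
  (2 * size l <= #|T|)%N -> (#|T| <= 2 * #|[predC l]|)%N.
Proof.
have := cardC [in l].
have -> : #|[in l]| = #|l| by apply: eq_card.
have -> : #|[predC [in l]]| = #|[predC l]| by apply: eq_card.
by have := card_size l; lia.
Qed.

Lemma sumr_notin (T : finType) (R : numDomainType) (l : seq T) :
  \sum_(t <- enum T) ((t \notin l)%:R : R) = #|[predC l]|%:R.
Proof.
rewrite -sum1_card natr_sum big_enum [RHS]big_mkcond /=.
by apply: eq_bigr => t _; rewrite inE; case: (t \in l).
Qed.

Section GridFamily.
Variables (R : realType) (d k : nat).
Hypothesis k_gt0 : (0 < k)%N.

Local Notation cell := {ffun 'I_d -> 'I_k}.
Local Notation labelling := {ffun cell -> bool}.

Definition grid_pt (t : cell) : feat R d := \row_j ((t j)%:R / k%:R).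
Definition gap : R := (2 * k%:R)^-1.
Definition season (b : bool) : R := if b then 1 + gap else 1 - gap.
Definition ncells : R := #|cell|%:R.
Definition labelled_pt (s : labelling) (t : cell) : feat R d * R :=
  (grid_pt t, season (s t)).
Definition grid_joint (s : labelling) : joint R d :=
  [seq (ncells^-1, labelled_pt s t) | t <- enum cell].
Definition grid_family : seq (joint R d) :=
  [seq grid_joint s | s <- enum labelling].

Lemma card_cell : #|cell| = (k ^ d)%N.
Proof. by rewrite card_ffun !card_ord. Qed.

Lemma ncells_gt0 : 0 < ncells.
Proof. by rewrite /ncells ltr0n card_cell expn_gt0 k_gt0. Qed.

Lemma sum_cell_weights : \sum_(t <- enum cell) ncells^-1 = 1.
Proof.
by rewrite big_enum /= sumr_const -mulr_natr mulVf // lt0r_neq0 // ncells_gt0.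
Qed.

Lemma gap_gt0 : 0 < gap.
Proof. by rewrite /gap invr_gt0 mulr_gt0 // ltr0n. Qed.

Lemma gap_le_half : gap <= 1/2.
Proof.
rewrite /gap mul1r lef_pV2 ?posrE ?mulr_gt0 ?ltr0n //.
by rewrite ler_pMr // ler1n.
Qed.

Lemma season_gt0 b : 0 < season b.
Proof. by have := gap_gt0; have := gap_le_half; rewrite /season; case: b; lra. Qed.

Lemma grid_pt_inj : injective grid_pt.
Proof.
have k_neq0 : k%:R != 0 :> R by rewrite pnatr_eq0 -lt0n.
move=> t1 t2 /rowP eq_t; apply/ffunP => j; apply/val_inj/eqP.
have := eq_t j; rewrite !mxE => /(congr1 ( *%R^~ k%:R)).
by rewrite !divfK // => /eqP; rewrite eqr_nat.
Qed.

Lemma dist2_grid_pt_ge {t1 t2 : cell} :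
  t1 != t2 -> k%:R^-1 <= dist2 (grid_pt t1) (grid_pt t2).
Proof.
move=> t12; have [j t12j] : exists j, t1 j != t2 j.
  by apply/existsP; apply: contraR t12; rewrite negb_exists => /forallP eq_t;
    apply/eqP/ffunP => j; apply/eqP; rewrite -[_ == _]negbK.
set w : R := k%:R^-1.
have w_gt0 : 0 < w by rewrite invr_gt0 ltr0n.
have coord_ge : w ^+ 2 <= (grid_pt t1 ord0 j - grid_pt t2 ord0 j) ^+ 2.
  rewrite !mxE -/w.
  have one_le : 1 <= ((t2 j)%:R - (t1 j)%:R) ^+ 2 :> R.
    have [lt12|lt21|/val_inj eq12] := ltngtP (t1 j) (t2 j).
    - have : (t1 j)%:R + 1 <= (t2 j)%:R :> R by rewrite natr1 ler_nat.
      nra.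
    - have : (t2 j)%:R + 1 <= (t1 j)%:R :> R by rewrite natr1 ler_nat.
      nra.
    - by rewrite eq12 eqxx in t12j.
  have -> : ((t1 j)%:R * w - (t2 j)%:R * w) ^+ 2 =
            ((t2 j)%:R - (t1 j)%:R) ^+ 2 * w ^+ 2 :> R by ring.
  by rewrite ler_peMl // sqr_ge0.
rewrite /dist2 -(ger0_norm (ltW w_gt0)) -sqrtr_sqr ler_sqrt; last first.
  by apply: sumr_ge0 => i _; exact: sqr_ge0.
apply: (le_trans coord_ge); rewrite (bigD1 j) //= lerDl.
by apply: sumr_ge0 => i _; exact: sqr_ge0.
Qed.

Lemma filter_grid_pt (t : cell) :
  [seq u <- enum cell | grid_pt u == grid_pt t] = [:: t].
Proof.
rewrite (eq_filter (a2 := pred1 t)); last first.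
  by move=> u /=; apply/eqP/eqP => [/grid_pt_inj|->].
by rewrite filter_pred1_uniq ?enum_uniq ?mem_enum.
Qed.

Lemma xmass_grid_pt s t : xmass (grid_joint s) (grid_pt t) = ncells^-1.
Proof.
by rewrite /xmass /grid_joint big_map -big_filter filter_grid_pt big_seq1.
Qed.

Lemma in_xsupp_grid s x : in_xsupp (grid_joint s) x -> exists t, x = grid_pt t.
Proof.
rewrite /in_xsupp /xmass /grid_joint big_map /=.
have [/hasP [t _ /eqP <-]|no_t] := boolP (has (fun t => grid_pt t == x) (enum cell)).
  by exists t.
by rewrite big_hasC // ltxx.
Qed.

Lemma cond_grid_pt s t : cond (grid_joint s) (grid_pt t) = [:: (1, season (s t))].
Proof.
rewrite /cond xmass_grid_pt /grid_joint filter_map /=.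
by rewrite (filter_grid_pt t) /= divff // invr_neq0 // lt0r_neq0 // ncells_gt0.
Qed.

Lemma grid_joint_is_joint s : is_joint (grid_joint s).
Proof.
split; first split.
- by move=> p /mapP [t _ ->]; rewrite invr_ge0 ltW // ncells_gt0.
- by rewrite /grid_joint big_map sum_cell_weights.
move=> p /mapP [t _ ->] /=; split; last exact: season_gt0.
move=> i; rewrite mxE divr_ge0 ?ler0n //=.
by rewrite ler_pdivrMr ?ltr0n // mul1r ler_nat ltnW.
Qed.

Lemma grid_joint_lipschitz s : lipschitz 1 (grid_joint s).
Proof.
move=> _ _ /in_xsupp_grid [t1 ->] /in_xsupp_grid [t2 ->].
rewrite !cond_grid_pt mul1r; apply: emd_le_dirac.
have [<-|t12] := eqVneq t1 t2; first by rewrite subrr normr0 sqrtr_ge0.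
apply: le_trans (dist2_grid_pt_ge t12).
have -> : k%:R^-1 = 2 * gap by rewrite /gap invfM mulrA divff ?mul1r // pnatr_eq0.
have := gap_gt0; rewrite ler_norml /season => gap_gt0.
by apply/andP; split; case: (s t1); case: (s t2); lra.
Qed.

Lemma g_season_opt b : g (~~ b)%:R (season b) = 1.
Proof.
have := gap_gt0; have := gap_le_half; rewrite /g /season.
case: b => /= ? ?; first by rewrite ifT ?min_l ?addr0 ?divr1; lra.
by rewrite ifF ?min_r ?divff //; [lra | lra | apply/negbTE; rewrite -ltNge; lra].
Qed.

Lemma grid_joint_opt s : opt_is (grid_joint s) 1.
Proof.
have ecr_avg th : ecr (grid_joint s) th =
    \sum_(t <- enum cell) ncells^-1 * g (th (grid_pt t)) (season (s t)).
  by rewrite /ecr /expect /grid_joint big_map.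
split.
  exists (fun x => (~~ [exists u, (grid_pt u == x) && s u])%:R).
  split; first by move=> x; rewrite ler0n.
  rewrite ecr_avg -[RHS]sum_cell_weights; apply: eq_bigr => t _.
  suff -> : [exists u, (grid_pt u == grid_pt t) && s u] = s t.
    by rewrite g_season_opt mulr1.
  apply/existsP/idP => [[u /andP [/eqP /grid_pt_inj -> //]]|st].
  by exists t; rewrite eqxx.
move=> th th_ge0; rewrite ecr_avg -sum_cell_weights.
apply: ler_sum => t _; rewrite -[X in X <= _]mulr1; apply: ler_wpM2l.
  by rewrite invr_ge0 ltW // ncells_gt0.
by apply: g_ge1; [exact: th_ge0 | exact: season_gt0].
Qed.

Fixpoint Eunif n (G : seq cell -> R) : R :=
  match n with
  | 0 => G [::]
  | n'.+1 => \sum_(t <- enum cell) ncells^-1 * Eunif n' (fun l => G (t :: l))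
  end.

Lemma Esamp_grid_joint s n (G : seq (feat R d * R) -> R) :
  Esamp (grid_joint s) n G = Eunif n (fun l => G (map (labelled_pt s) l)).
Proof.
elim: n G => [|n IH] G //=.
by rewrite /grid_joint big_map; apply: eq_bigr => t _; rewrite IH.
Qed.

Lemma Eunif_sum (I : Type) (r : seq I) n (G : I -> seq cell -> R) :
  \sum_(i <- r) Eunif n (G i) = Eunif n (fun l => \sum_(i <- r) G i l).
Proof.
elim: n G => [|n IH] G //=.
by rewrite exchange_big; apply: eq_bigr => t _; rewrite -mulr_sumr IH.
Qed.

Lemma Eunif_ge n c (G : seq cell -> R) :
  (forall l, size l = n -> c <= G l) -> c <= Eunif n G.
Proof.
elim: n G => [|n IH] G G_ge /=; first exact: G_ge.
rewrite -[c]mul1r -sum_cell_weights mulr_suml; apply: ler_sum => t _.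
apply: ler_wpM2l; first by rewrite invr_ge0 ltW // ncells_gt0.
by apply: IH => l size_l; apply: G_ge; rewrite /= size_l.
Qed.

Definition flip_label (t : cell) (s : labelling) : labelling :=
  [ffun u => if u == t then ~~ s u else s u].

Lemma flip_labelK t : involutive (flip_label t).
Proof.
by move=> s; apply/ffunP => u; rewrite !ffunE; case: (u == t); rewrite ?negbK.
Qed.

Section Algorithm.
Variable A : algorithm R d.
Hypothesis A_valid : valid_alg A.

Definition cell_cost (l : seq cell) (t : cell) (s : labelling) : R :=
  g (A (map (labelled_pt s) l) (grid_pt t)) (season (s t)).

Local Notation nlabels := (#|labelling|%:R : R).

(* Pairing s with the labelling flipped at t: the samples look the same, the
   season at t does not. *)
Lemma sum_cell_cost_unseen l t : t \notin l ->
  nlabels * (1 + gap / 2) <= \sum_s cell_cost l t s.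
Proof.
move=> t_notin_l.
have flip_samples s : map (labelled_pt (flip_label t s)) l = map (labelled_pt s) l.
  apply/eq_in_map => u u_in; rewrite /labelled_pt ffunE.
  by case: eqP => // u_t; rewrite -u_t u_in in t_notin_l.
have pair_ge : nlabels * (2 + gap) <=
    \sum_s (cell_cost l t s + cell_cost l t (flip_label t s)).
  rewrite mulr_natl -sumr_const; apply: ler_sum => s _.
  rewrite /cell_cost flip_samples ffunE eqxx.
  have th_ge0 := A_valid (map (labelled_pt s) l) (grid_pt t).
  rewrite /season; case: (s t) => /=; last rewrite [X in _ <= X]addrC;
    exact: g_addpm_ge th_ge0 gap_gt0 gap_le_half.
have sum_flip : \sum_s cell_cost l t (flip_label t s) = \sum_s cell_cost l t s.
  by rewrite [RHS](reindex_inj (can_inj (flip_labelK t))).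
move: pair_ge; rewrite big_split /= sum_flip.
have : 0 <= nlabels by rewrite ler0n.
nra.
Qed.

Lemma sum_cell_cost_ge l t :
  nlabels * (1 + gap / 2 * (t \notin l)%:R) <= \sum_s cell_cost l t s.
Proof.
have [t_in_l|t_notin_l] /= := boolP (t \in l); last first.
  by rewrite mulr1; exact: sum_cell_cost_unseen.
rewrite mulr0 addr0 mulr1 -[nlabels]mulr1 mulr_natl -sumr_const.
by apply: ler_sum => s _; apply: g_ge1; [exact: A_valid | exact: season_gt0].
Qed.

Lemma cell_avg_affine (a b : R) (x : cell -> R) :
  \sum_(t <- enum cell) ncells^-1 * (a + b * x t) =
  a + b * (ncells^-1 * \sum_(t <- enum cell) x t).
Proof.
under eq_bigr do rewrite mulrDr mulrCA.
by rewrite big_split /= -mulr_suml sum_cell_weights mul1r -!mulr_sumr.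
Qed.

Lemma sum_ecr_grid_joint_ge l : (2 * size l <= #|cell|)%N ->
  nlabels * (1 + gap / 4) <=
  \sum_(s <- enum labelling) ecr (grid_joint s) (A (map (labelled_pt s) l)).
Proof.
move=> size_l.
have -> : \sum_(s <- enum labelling) ecr (grid_joint s) (A (map (labelled_pt s) l))
    = \sum_(t <- enum cell) ncells^-1 * \sum_s cell_cost l t s.
  under eq_bigr do rewrite /ecr /expect /grid_joint big_map.
  by rewrite exchange_big; apply: eq_bigr => t _; rewrite mulr_sumr big_enum.
have avg_ge : \sum_(t <- enum cell) ncells^-1 *
      (nlabels + nlabels * (gap / 2) * (t \notin l)%:R) <=
    \sum_(t <- enum cell) ncells^-1 * \sum_s cell_cost l t s.
  apply: ler_sum => t _; apply: ler_wpM2l; first by rewrite invr_ge0 ltW // ncells_gt0.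
  by rewrite -mulrA -[X in X + _]mulr1 -mulrDr; exact: sum_cell_cost_ge.
apply: le_trans avg_ge; rewrite cell_avg_affine sumr_notin.
have half_unseen : 1 / 2 <= ncells^-1 * #|[predC l]|%:R.
  have : ncells <= 2 * #|[predC l]|%:R.
    by rewrite /ncells -natrM ler_nat card_predC_seq_ge.
  by rewrite (mulrC ncells^-1) ler_pdivlMr ?ncells_gt0 //; lra.
move: half_unseen; set unseen := ncells^-1 * _ => half_unseen.
have : 0 <= nlabels * gap * (unseen - 1 / 2).
  apply: mulr_ge0; last by rewrite subr_ge0.
  by rewrite mulr_ge0 ?ler0n // ltW // gap_gt0.
by move: nlabels => N; lra.
Qed.

Lemma avg_ecr_grid_family_ge n : (2 * n <= k ^ d)%N ->
  1 + gap / 4 <= avg_ecr A grid_family n.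
Proof.
move=> size_n.
rewrite /avg_ecr size_map -cardE big_map.
under eq_bigr do rewrite Esamp_grid_joint.
rewrite Eunif_sum -/nlabels.
have nl_gt0 : 0 < nlabels by rewrite ltr0n; apply/card_gt0P; exists [ffun => true].
rewrite -ler_pdivrMl ?invr_gt0 // invrK.
by apply: Eunif_ge => l size_l; apply: sum_ecr_grid_joint_ge; rewrite size_l card_cell.
Qed.

End Algorithm.

Lemma grid_family_neq0 : grid_family != [::].
Proof.
rewrite -size_eq0 size_map -cardE -lt0n; apply/card_gt0P.
by exists [ffun => true].
Qed.

End GridFamily.

Lemma powR_Nquarter (R : realType) (eps : R) (m : nat) : 0 <= eps ->
  powR eps (- (m%:R / 4)) = powR eps (- (1 / 4)) ^+ m.
Proof.
move=> eps_ge0; rewrite -powR_mulrn ?powR_ge0 // -powRrM.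
by congr powR; field.
Qed.

Lemma grid_size_exists (R : realType) (u : R) : 4 < u ->
  exists k : nat, 2 * u < k%:R /\ 16 * k%:R <= u ^+ 4.
Proof.
move=> u_gt4; have u4_ge : 64 * u <= u ^+ 4.
  have -> : u ^+ 4 = u * u * (u * u) by ring.
  have : 0 <= u * u * (u * u - 16) + 16 * u * (u - 4).
    by apply: addr_ge0; apply: mulr_ge0; nra.
  lra.
have V_ge0 : 0 <= u ^+ 4 / 16 by lra.
exists (Num.truncn (u ^+ 4 / 16)).
have /andP [] := truncn_itv V_ge0; move: (Num.truncn _) => k k_le.
rewrite -[k.+1]addn1 natrD => k_gt; split; lra.
Qed.

Lemma grid_for_eps (R : realType) (d : nat) (eps : R) :
  (1 <= d)%N -> 0 < eps -> eps < 256^-1 ->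
  exists2 k : nat, (0 < k)%N &
    eps < gap R k / 4 /\
    forall n : nat, n%:R <= powR eps (- (d%:R / 4)) -> (2 * n <= k ^ d)%N.
Proof.
move=> d_ge1 eps_gt0 eps_lt; set u := powR eps (- (1 / 4)).
have eps_ge0 := ltW eps_gt0; have u_ge0 : 0 <= u by exact: powR_ge0.
have u4 : u ^+ 4 = eps^-1.
  by rewrite -powR_Nquarter // divff ?pnatr_eq0 // powR_inv1.
have eps_u4 : eps * u ^+ 4 = 1 by rewrite u4 mulfV ?lt0r_neq0.
have u_gt4 : 4 < u.
  rewrite ltNge; apply/negP => u_le4.
  have : u ^+ 4 <= 4 ^+ 4 by rewrite lerXn2r ?nnegrE.
  have : 256 * eps < 1 by rewrite -ltr_pdivlMl ?ltr0n // mulr1.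
  nra.
have [k [u_lt_k k_le_u4]] := grid_size_exists _ _ u_gt4.
have k_gt0 : 0 < k%:R :> R by lra.
have k_pos : (0 < k)%N by rewrite -(ltr0n R).
exists k => //; split.
  have gapk : 2 * k%:R * gap R k = 1 by rewrite mulfV ?mulf_neq0 ?lt0r_neq0.
  have := gap_gt0 _ _ k_pos; nra.
move=> n; rewrite powR_Nquarter // -(ler_nat R) natrM natrX => n_le.
have : 2 * u ^+ d <= (2 * u) ^+ d.
  by rewrite exprMn ler_wpM2r ?exprn_ge0 // -[X in X <= _]expr1 ler_eXn2l ?ltr1n.
have : (2 * u) ^+ d <= k%:R ^+ d by rewrite lerXn2r ?nnegrE; lra.
lra.
Qed.

Theorem mainTheorem8 (R : realType) (d : nat) (hd : (1 <= d)%N) :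
  exists eps0 : R, 0 < eps0 /\
  forall eps : R, 0 < eps -> eps < eps0 ->
  forall A : algorithm R d, valid_alg A ->
  exists F : seq (joint R d),
    F != [::] /\
    (forall K, K \in F -> is_joint K /\ lipschitz 1 K /\ opt_is K 1) /\
    (forall n : nat, n%:R <= powR eps (- (d%:R / 4)) ->
       avg_ecr A F n > (1 + eps) * 1).
Proof.
exists 256^-1; split; first by rewrite invr_gt0 ltr0n.
move=> eps eps_gt0 eps_lt A A_valid.
have [k k_gt0 [eps_lt_gap samples_le]] := grid_for_eps R d eps hd eps_gt0 eps_lt.
exists (grid_family R d k); split; first exact: grid_family_neq0.
split.
  move=> _ /mapP [s _ ->]; split; first exact: grid_joint_is_joint.
  by split; [exact: grid_joint_lipschitz | exact: grid_joint_opt].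
move=> n n_le; rewrite mulr1.
apply: lt_le_trans (avg_ecr_grid_family_ge _ _ _ k_gt0 _ A_valid _ (samples_le n n_le)).
by rewrite ltrD2l.
Qed.
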